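(* Let $R$ be the tropicalized whurl map defined in the context. Identify a carrier state $(a,b,c)$ with $(x^{(1)},x^{(2)},x^{(3)})$ and a site state $(d,e,f)$ with $(y^{(1)},y^{(2)},y^{(3)})$. Then for all nonnegative integers $b,c,d,e,f$ with $d=e-f+1$, for all sufficiently large $a$ one has $(x'^{(1)},x'^{(2)},x'^{(3)})=(d',e',f')$ and $(y'^{(2)},y'^{(3)})=(b',c')$, where $d',e',f',b',c'$ are given by the $T_\infty$ carrier formulas $d'=d+b+f-\min(e+c,d+c,d+b)$, $e'=e+b-\min(d,e)$, $f'=\min(e+c,d+c,d+b)-\min(d,e)$, $b'=\min(d,e)$, $c'=c+f+\min(d,e)-\min(e+c,d+c,d+b)$; moreover $y'^{(1)}\to\infty$ as $a\to\infty$. That is, the carrier action of the box-basket-ball system is the tropicalization of the three-wire whurl relation with $x^{(1)}=\infty$.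
   Context: The tropicalization (replacing $+$ by $\min$, $\times$ by $+$, $\div$ by $-$) of the whurl relation for a cylinder with three horizontal wires (two oriented right, one left) and two whurls is the map $(x^{(1)},x^{(2)},x^{(3)};y^{(1)},y^{(2)},y^{(3)})\mapsto(x'^{(1)},x'^{(2)},x'^{(3)};y'^{(1)},y'^{(2)},y'^{(3)})$ given by, writing $P=\min(x^{(1)}+x^{(2)},x^{(1)}+x^{(3)},x^{(2)}+y^{(3)})$, $Q=\min(y^{(2)}+x^{(3)},y^{(1)}+x^{(3)},y^{(1)}+x^{(2)})$, $W=\min(x^{(1)}+y^{(2)},y^{(1)}+y^{(3)},y^{(2)}+y^{(3)})$: $x'^{(1)}=y^{(1)}+P-Q$, $x'^{(2)}=y^{(2)}+P-W$, $x'^{(3)}=y^{(3)}+Q-W$, $y'^{(1)}=x^{(1)}+Q-P$, $y'^{(2)}=x^{(2)}+W-P$, $y'^{(3)}=x^{(3)}+W-Q$. A site state of the box-basket-ball system is a triple $(d,e,f)$ of nonnegative integers with $d=e-f+1$ ($e$ baskets, $f$ balls, one box). *)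

From Stdlib Require Import ZArith Lia.
Open Scope Z_scope.

Record whurl_out : Type := WhurlOut {
  x1' : Z; x2' : Z; x3' : Z; y1' : Z; y2' : Z; y3' : Z }.

Definition min3 (u v w : Z) : Z := Z.min u (Z.min v w).

Definition whurl_trop (x1 x2 x3 y1 y2 y3 : Z) : whurl_out :=
  let P := min3 (x1 + x2) (x1 + x3) (x2 + y3) in
  let Q := min3 (y2 + x3) (y1 + x3) (y1 + x2) in
  let W := min3 (x1 + y2) (y1 + y3) (y2 + y3) in
  WhurlOut (y1 + P - Q) (y2 + P - W) (y3 + Q - W)
           (x1 + Q - P) (x2 + W - P) (x3 + W - Q).

Definition carrier_d' (b c d e f : Z) : Z := d + b + f - min3 (e + c) (d + c) (d + b).
Definition carrier_e' (b c d e f : Z) : Z := e + b - Z.min d e.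
Definition carrier_f' (b c d e f : Z) : Z := min3 (e + c) (d + c) (d + b) - Z.min d e.
Definition carrier_b' (b c d e f : Z) : Z := Z.min d e.
Definition carrier_c' (b c d e f : Z) : Z := c + f + Z.min d e - min3 (e + c) (d + c) (d + b).

(** For large [x1] the min-plus expressions [P] and [W] of the whurl map stop
    depending on [x1]: [P] is attained by [x2 + y3] and [W] by
    [min y1 y2 + y3], while [Q] never involves [x1].  Substituting these values
    gives exactly the [T_infinity] carrier formulas for four of the outputs, and
    leaves [y1' = x1 + Q - x2 - y3], which grows linearly in [x1]. *)

From Stdlib Require Import ZArith Lia.
Open Scope Z_scope.

Lemma min3_r (u v w : Z) : w <= u -> w <= v -> min3 u v w = w.
Proof. intros Hu Hv; unfold min3; lia. Qed.

Lemma min3_l (u v w : Z) : Z.min v w <= u -> min3 u v w = Z.min v w.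
Proof. intros Hu; unfold min3; lia. Qed.

Definition whurl_threshold (x2 x3 y1 y2 y3 : Z) : Z :=
  Z.abs x2 + Z.abs x3 + Z.abs y1 + Z.abs y2 + Z.abs y3.

Lemma whurl_trop_x1_large (x1 x2 x3 y1 y2 y3 : Z) :
  whurl_threshold x2 x3 y1 y2 y3 <= x1 ->
  let Q := min3 (y2 + x3) (y1 + x3) (y1 + x2) in
  whurl_trop x1 x2 x3 y1 y2 y3 =
    WhurlOut (y1 + x2 + y3 - Q) (y2 + x2 - Z.min y1 y2) (Q - Z.min y1 y2)
             (x1 + Q - (x2 + y3)) (Z.min y1 y2) (x3 + y3 + Z.min y1 y2 - Q).
Proof.
  intros Hx1 Q; unfold whurl_threshold in Hx1.
  assert (HP : min3 (x1 + x2) (x1 + x3) (x2 + y3) = x2 + y3)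
    by (apply min3_r; lia).
  assert (HW : min3 (x1 + y2) (y1 + y3) (y2 + y3) = Z.min y1 y2 + y3)
    by (rewrite min3_l; lia).
  unfold whurl_trop; rewrite HP, HW; fold Q.
  f_equal; lia.
Qed.

Theorem mainTheorem3 :
  forall b c d e f : Z,
    0 <= b -> 0 <= c -> 0 <= d -> 0 <= e -> 0 <= f -> d = e - f + 1 ->
    (exists A : Z, forall a : Z, A <= a ->
       let o := whurl_trop a b c d e f in
       x1' o = carrier_d' b c d e f /\
       x2' o = carrier_e' b c d e f /\
       x3' o = carrier_f' b c d e f /\
       y2' o = carrier_b' b c d e f /\
       y3' o = carrier_c' b c d e f) /\
    (forall M : Z, exists A : Z, forall a : Z, A <= a ->
       M <= y1' (whurl_trop a b c d e f)).
Proof.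
  intros b c d e f _ _ _ _ _ _.
  set (Q := min3 (e + c) (d + c) (d + b)).
  split.
  - exists (whurl_threshold b c d e f); intros a Ha o.
    unfold o; rewrite (whurl_trop_x1_large a b c d e f Ha); cbn.
    repeat split.
  - intros M.
    exists (Z.max (whurl_threshold b c d e f) (M - Q + b + f)); intros a Ha.
    rewrite (whurl_trop_x1_large a b c d e f) by lia; cbn; fold Q.
    lia.
Qed.
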